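(* Let $\mathcal{K}\subseteq\mathbb{R}\cup\{\pm\infty\}$ have nonzero Lebesgue measure, let $\varpi:\mathcal{K}\to\mathbb{R}_{\geq 0}$ be Lebesgue integrable with only countably many zeros, let $d,n,\rho\in\mathbb{N}$, let $\mathbf{f}\in\mathbb{L}^2_{\varpi}(\mathcal{K};\mathbb{R}^d)$ satisfy $\int_{\mathcal{K}}\varpi(\tau)\mathbf{f}(\tau)\mathbf{f}^\top(\tau)\,d\tau\succ 0$, put $F(\tau)=\mathbf{f}(\tau)\otimes I_n$, and let $U\in\mathbb{R}^{n\times n}$ be symmetric with $U\succeq 0$. Suppose there exist a symmetric $Y\in\mathbb{R}^{\rho dn\times\rho dn}$ and $X=[X_1\ \cdots\ X_d]\in\mathbb{R}^{n\times\rho dn}$ with $X_i\in\mathbb{R}^{n\times\rho n}$ such that $$\begin{bmatrix}U & -X\\ -X^\top & Y\end{bmatrix}\succeq 0 .$$ Put $\widehat{X}=\mathrm{Col}_{i=1}^d X_i\in\mathbb{R}^{dn\times\rho n}$ and $W=\int_{\mathcal{K}}\varpi(\tau)(\mathbf{f}^\top(\tau)\otimes I_{\rho n})Y(\mathbf{f}(\tau)\otimes I_{\rho n})\,d\tau$. Then $$\int_{\mathcal{K}}\varpi(\tau)\mathbf{x}^\top(\tau)U\mathbf{x}(\tau)\,d\tau\geq 2\boldsymbol{\vartheta}^\top\widehat{X}\mathbf{z}-\mathbf{z}^\top W\mathbf{z}$$ for all $\mathbf{z}\in\mathbb{R}^{\rho n}$ and $\mathbf{x}\in\mathbb{L}^2_{\varpi}(\mathcal{K};\mathbb{R}^n)$,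 where $\boldsymbol{\vartheta}=\int_{\mathcal{K}}\varpi(\tau)F(\tau)\mathbf{x}(\tau)\,d\tau$. Furthermore, if $\Upsilon\in\mathbb{R}^{dn\times\rho n}$ and $\mathbf{z}\in\mathbb{R}^{\rho n}$ satisfy $\Upsilon\mathbf{z}=\int_{\mathcal{K}}\varpi(\tau)F(\tau)\mathbf{x}(\tau)\,d\tau$, then $$\int_{\mathcal{K}}\varpi(\tau)\mathbf{x}^\top(\tau)U\mathbf{x}(\tau)\,d\tau\geq\mathbf{z}^\top\big[\Upsilon^\top\widehat{X}+\widehat{X}^\top\Upsilon-W\big]\mathbf{z}.$$
   Context: $\mathbb{L}^2_{\varpi}(\mathcal{K};\mathbb{R}^m)$ is the set of Lebesgue integrable functions $\phi:\mathcal{K}\to\mathbb{R}^m$ with $\int_{\mathcal{K}}\varpi\phi^\top\phi\,d\tau<\infty$. $\mathrm{Col}_{i=1}^d X_i$ is the vertical stack of the blocks $X_i$; $\otimes$ is the Kronecker product. *)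

From HB Require Import structures.
From mathcomp Require Import all_boot all_order all_algebra.
From mathcomp Require Import all_classical all_reals all_analysis.
From mathcomp Require Import mxtens.

Set Implicit Arguments.
Unset Strict Implicit.
Unset Printing Implicit Defensive.

Import Order.TTheory GRing.Theory Num.Theory.
Import numFieldNormedType.Exports.
Local Open Scope classical_set_scope.
Local Open Scope ring_scope.

Section Defs.
Variable R : realType.
Local Notation mu := (@lebesgue_measure R).

Definition psd {m} (A : 'M[R]_m) : Prop :=
  A^T = A /\ forall v : 'cV[R]_m, 0 <= (v^T *m A *m v) 0 0.

Definition pd {m} (A : 'M[R]_m) : Prop :=
  A^T = A /\ forall v : 'cV[R]_m, v != 0 -> 0 < (v^T *m A *m v) 0 0.

Definition L2w (K : set R) (w : R -> R) {m} (phi : R -> 'cV[R]_m) : Prop :=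
  (forall i, measurable_fun K (fun t => phi t i ord0)) /\
  (\int[mu]_(t in K) ((w t * ((phi t)^T *m phi t) 0 0)%:E) < +oo)%E.

Definition mxint (K : set R) (w : R -> R) {p q} (M : R -> 'M[R]_(p, q))
  : 'M[R]_(p, q) :=
  \matrix_(i, j) Rintegral mu K (fun t => w t * M t i j).

Definition kronI {m} (v : 'cV[R]_m) (k : nat) : 'M[R]_(m * k, k) :=
  castmx (erefl, mul1n k) (v *t (1%:M : 'M[R]_k)).

(* i-th block X_i (n x q) of X = [X_1 ... X_d] (n x d*q) *)
Definition Xblk {n d q} (X : 'M[R]_(n, d * q)) (i : 'I_d) : 'M[R]_(n, q) :=
  \matrix_(a, b) X a (mxtens_index (i, b)).

Definition Xhat {n d q} (X : 'M[R]_(n, d * q)) : 'M[R]_(d * n, q) :=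
  \matrix_(k, b) Xblk X (mxtens_unindex k).1 (mxtens_unindex k).2 b.

End Defs.

From HB Require Import structures.
From mathcomp Require Import all_boot all_order all_algebra.
From mathcomp Require Import all_classical all_reals all_analysis.
From mathcomp Require Import mxtens measurable_realfun.
From mathcomp Require Import ring lra.

Import Order.TTheory GRing.Theory Num.Theory.
Import numFieldNormedType.Exports.
Local Open Scope classical_set_scope.
Local Open Scope ring_scope.

(* Testing [U, -X; -X^T, Y] >= 0 on the vector (x(t), (f(t) (x) I) z) gives,
   pointwise in t,
     2 x^T X (f (x) I) z - z^T (f (x) I)^T Y (f (x) I) z <= x^T U x,
   and X (f (x) I_q) = (f (x) I_n)^T Xhat turns the cross term into
   (F x)^T Xhat z.  Multiplying by w >= 0 and integrating over K gives the first
   inequality: the integral commutes with the constant matrices z and Xhat z,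
   and every integrand is integrable because products of weighted-L^2
   functions are w-integrable.  The second inequality is the first one with
   theta = Upsilon z, after symmetrising the quadratic form. *)

Section RealIntegrable.
Context {d} {T : measurableType d} {R : realType}.
Context {mu : {measure set T -> \bar R}}.
Context {D : set T} (mD : measurable D).

Lemma integrable_EFinD {f g : T -> R} :
  mu.-integrable D (EFin \o f) -> mu.-integrable D (EFin \o g) ->
  mu.-integrable D (EFin \o (fun x => f x + g x)).
Proof.
move=> fi gi; have := integrableD mD fi gi.
by apply: eq_integrable => // x _; rewrite /= EFinD.
Qed.

Lemma integrable_EFinB {f g : T -> R} :
  mu.-integrable D (EFin \o f) -> mu.-integrable D (EFin \o g) ->
  mu.-integrable D (EFin \o (fun x => f x - g x)).
Proof.
move=> fi gi; have := integrableB mD fi gi.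
by apply: eq_integrable => // x _; rewrite /= EFinB.
Qed.

Lemma integrable_EFinZ (c : R) {f : T -> R} :
  mu.-integrable D (EFin \o f) -> mu.-integrable D (EFin \o (fun x => c * f x)).
Proof.
move=> fi; have := integrableZl mD c fi.
by apply: eq_integrable => // x _; rewrite /= EFinM.
Qed.

Lemma integrable_EFin_sum {I : Type} (s : seq I) {F : I -> T -> R} :
  (forall i, mu.-integrable D (EFin \o F i)) ->
  mu.-integrable D (EFin \o (fun x => \sum_(i <- s) F i x)).
Proof.
move=> Fi; have := integrable_sum mD s (P := xpredT) (fun i _ => Fi i).
by apply: eq_integrable => // x _; rewrite /= sumEFin.
Qed.

Lemma Rintegral_sum {I : Type} (s : seq I) {F : I -> T -> R} :
  (forall i, mu.-integrable D (EFin \o F i)) ->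
  \int[mu]_(x in D) \sum_(i <- s) F i x = \sum_(i <- s) \int[mu]_(x in D) F i x.
Proof.
move=> Fi; elim: s => [|i s IH].
  under eq_Rintegral do rewrite big_nil.
  by rewrite Rintegral_cst // mul0r big_nil.
under eq_Rintegral do rewrite big_cons.
by rewrite RintegralD // ?IH ?big_cons //; exact: integrable_EFin_sum.
Qed.

End RealIntegrable.

Section MatrixSums.
Context (R : pzRingType).

Lemma mulmx3E p q r s (A : 'M[R]_(p, q)) (M : 'M[R]_(q, r)) (B : 'M[R]_(r, s))
    i j :
  (A *m M *m B) i j = \sum_l \sum_k A i k * M k l * B l j.
Proof. by rewrite mxE; apply: eq_bigr => l _; rewrite mxE mulr_suml. Qed.

Lemma sum_mxtens m n (F : 'I_(m * n) -> R) :
  \sum_k F k = \sum_(i < m) \sum_(j < n) F (mxtens_index (i, j)).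
Proof.
rewrite pair_big /= (reindex (@mxtens_index m n)) /=.
  by apply: eq_bigr => -[].
exists (@mxtens_unindex m n) => k _.
  exact: mxtens_indexK.
exact: mxtens_unindexK.
Qed.

Lemma sum_mul_delta n (F : 'I_n -> R) b : \sum_j F j * (j == b)%:R = F b.
Proof.
rewrite (bigD1 b) //= eqxx mulr1 big1 ?addr0 // => j /negbTE ->.
by rewrite mulr0.
Qed.

End MatrixSums.

Section ColumnVectors.
Context (R : realDomainType).

Lemma dot_cV_ge0 m (v : 'cV[R]_m) : 0 <= (v^T *m v) 0 0.
Proof. by rewrite mxE sumr_ge0 // => k _; rewrite mxE -expr2 sqr_ge0. Qed.

Lemma cV_sqr_le_dot m (v : 'cV[R]_m) i : v i 0 ^+ 2 <= (v^T *m v) 0 0.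
Proof.
rewrite mxE (bigD1 i) //= mxE -expr2 lerDl sumr_ge0 // => k _.
by rewrite mxE -expr2 sqr_ge0.
Qed.

End ColumnVectors.

Section Kronecker.
Context (R : realType).

Lemma kronI_index m (v : 'cV[R]_m) k (a : 'I_m) (b : 'I_k) j :
  kronI v k (mxtens_index (a, b)) j = v a 0 * (b == j)%:R.
Proof.
rewrite /kronI castmxE mxE cast_ord_id mxtens_indexK.
have -> : (mxtens_unindex (cast_ord (esym (mul1n k)) j)).1 = 0 by rewrite ord1.
have -> : (mxtens_unindex (cast_ord (esym (mul1n k)) j)).2 = j.
  by apply/val_inj => /=; rewrite modn_small.
by rewrite /= mxE.
Qed.

Lemma mulmx_kronI_Xhat n d q (X : 'M[R]_(n, d * q)) (v : 'cV[R]_d) :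
  X *m kronI v q = (kronI v n)^T *m Xhat X.
Proof.
apply/matrixP => a b; rewrite !mxE !sum_mxtens; apply: eq_bigr => i _.
under eq_bigr do rewrite kronI_index mulrA.
under [RHS]eq_bigr do rewrite mxE kronI_index mulrAC.
by rewrite !sum_mul_delta /Xhat /Xblk !mxE mxtens_indexK mulrC.
Qed.

End Kronecker.

Section QuadraticForms.
Context (R : realType).

Lemma psd_block_cross_le n p (U : 'M[R]_n) (X : 'M[R]_(n, p)) (Y : 'M[R]_p)
    (a : 'cV[R]_n) (b : 'cV[R]_p) :
  psd (block_mx U (- X) (- X^T) Y) ->
  2 * (a^T *m X *m b) 0 0 - (b^T *m Y *m b) 0 0 <= (a^T *m U *m a) 0 0.
Proof.
case=> _ /(_ (col_mx a b)).
have -> : (col_mx a b)^T *m block_mx U (- X) (- X^T) Y *m col_mx a b =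
    a^T *m U *m a - (a^T *m X *m b)^T - a^T *m X *m b + b^T *m Y *m b.
  rewrite tr_col_mx mul_row_block mul_row_col !mulmxDl !mulmxN !mulNmx.
  by rewrite !trmx_mul trmxK !mulmxA !addrA.
move: (a^T *m U *m a) (a^T *m X *m b) (b^T *m Y *m b) => Ua Xab Yb.
rewrite !mxE; lra.
Qed.

Lemma psd_block_kronI_le n d q (U : 'M[R]_n) (X : 'M[R]_(n, d * q))
    (Y : 'M[R]_(d * q)) (v : 'cV[R]_d) (a : 'cV[R]_n) (z : 'cV[R]_q) :
  psd (block_mx U (- X) (- X^T) Y) ->
  2 * ((kronI v n *m a)^T *m (Xhat X *m z)) 0 0
    - (z^T *m ((kronI v q)^T *m Y *m kronI v q) *m z) 0 0
  <= (a^T *m U *m a) 0 0.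
Proof.
have -> : (kronI v n *m a)^T *m (Xhat X *m z) = a^T *m X *m (kronI v q *m z).
  by rewrite trmx_mul !mulmxA -(mulmxA a^T) mulmx_kronI_Xhat !mulmxA.
have -> : z^T *m ((kronI v q)^T *m Y *m kronI v q) *m z =
    (kronI v q *m z)^T *m Y *m (kronI v q *m z).
  by rewrite trmx_mul !mulmxA.
exact: psd_block_cross_le.
Qed.

Lemma quad_form_sym m q (Ups Xh : 'M[R]_(m, q)) (W : 'M[R]_q) (z : 'cV[R]_q) :
  (z^T *m (Ups^T *m Xh + Xh^T *m Ups - W) *m z) 0 0 =
  (2%:R *: ((Ups *m z)^T *m Xh *m z) - z^T *m W *m z) 0 0.
Proof.
have -> : z^T *m (Ups^T *m Xh + Xh^T *m Ups - W) *m z =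
    z^T *m Ups^T *m Xh *m z + (z^T *m Ups^T *m Xh *m z)^T - z^T *m W *m z.
  rewrite !mulmxDr !mulmxDl mulmxN mulNmx.
  by rewrite !trmx_mul !trmxK !mulmxA.
rewrite [(Ups *m z)^T]trmx_mul.
move: (z^T *m Ups^T *m Xh *m z) (z^T *m W *m z) => P Q.
rewrite !mxE; lra.
Qed.

End QuadraticForms.

Section WeightedL2.
Context (R : realType) (K : set R) (w : R -> R).
(* Lebesgue measure lives on [measurableTypeR R], a copy of [R] whose
   sigma-algebra has its own display; measurability is stated there. *)
Hypothesis mK : measurable (K : set (measurableTypeR R)).
Hypothesis w_ge0 : forall t, K t -> 0 <= w t.
Hypothesis w_int : (@lebesgue_measure R).-integrable K (EFin \o w).
Local Notation mu := (@lebesgue_measure R).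

Let mw : measurable_fun (K : set (measurableTypeR R)) w.
Proof. by case/integrableP: w_int => /measurable_EFinP. Qed.

Definition wL2 (g : R -> R) : Prop :=
  measurable_fun (K : set (measurableTypeR R)) g /\
  mu.-integrable K (EFin \o (fun t => w t * g t ^+ 2)).

Lemma wL2_mul_integrable {g h} : wL2 g -> wL2 h ->
  mu.-integrable K (EFin \o (fun t => w t * (g t * h t))).
Proof.
move=> [mg ig] [mh ih].
apply: (le_integrable mK _ _ (integrable_EFinD mK ig ih)).
  apply/measurable_EFinP; apply: measurable_funM => //.
  exact: measurable_funM.
move=> t Kt /=; have wt := w_ge0 t Kt; rewrite lee_fin normrM (ger0_norm wt).
rewrite [X in _ <= X]ger0_norm; last by rewrite addr_ge0 // mulr_ge0 // sqr_ge0.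
rewrite -mulrDr ler_wpM2l //.
have [gh0|gh0] := lerP 0 (g t * h t).
  by rewrite ger0_norm //; nra.
by rewrite ltr0_norm //; nra.
Qed.

Lemma wL2D g h : wL2 g -> wL2 h -> wL2 (g \+ h).
Proof.
move=> gL2 hL2; split; first by apply: measurable_funD; [case: gL2 | case: hL2].
have := integrable_EFinD mK (integrable_EFinD mK gL2.2
  (integrable_EFinZ mK 2 (wL2_mul_integrable gL2 hL2))) hL2.2.
by apply: eq_integrable => // t _; congr EFin; rewrite /=; ring.
Qed.

Lemma wL2Z c g : wL2 g -> wL2 (fun t => c * g t).
Proof.
move=> [mg ig]; split; first exact: measurable_funM.
have := integrable_EFinZ mK (c ^+ 2) ig.
by apply: eq_integrable => // t _; congr EFin; rewrite /=; ring.
Qed.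

Lemma wL2_sum (I : Type) (s : seq I) (F : I -> R -> R) :
  (forall i, wL2 (F i)) -> wL2 (fun t => \sum_(i <- s) F i t).
Proof.
move=> FL2; elim: s => [|i s IH].
  under eq_fun do rewrite big_nil.
  split; first exact: measurable_cst.
  by under eq_fun do rewrite expr0n mulr0; exact: integrable0.
under eq_fun do rewrite big_cons.
exact: wL2D.
Qed.

Definition mx_wL2 {p q} (A : R -> 'M[R]_(p, q)) : Prop :=
  forall i j, wL2 (fun t => A t i j).

Definition mx_wintegrable {p q} (M : R -> 'M[R]_(p, q)) : Prop :=
  forall i j, mu.-integrable K (EFin \o (fun t => w t * M t i j)).

Lemma L2w_mx_wL2 {m} {x : R -> 'cV[R]_m} : L2w K w x -> mx_wL2 x.
Proof.
move=> [mx ix] i j; rewrite (ord1 j); split; first exact: mx.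
have dotE t : ((x t)^T *m x t) 0 0 = \sum_k x t k 0 ^+ 2.
  by rewrite mxE; apply: eq_bigr => k _; rewrite mxE.
have mdot : measurable_fun (K : set (measurableTypeR R))
    (fun t => w t * ((x t)^T *m x t) 0 0).
  under eq_fun do rewrite dotE.
  apply: measurable_funM mw _; apply: measurable_sum => k.
  by apply: measurable_funX; exact: mx.
have idot : mu.-integrable K (EFin \o (fun t => w t * ((x t)^T *m x t) 0 0)).
  apply/integrableP; split; first exact/measurable_EFinP.
  apply: le_lt_trans ix; rewrite le_eqVlt; apply/orP; left; apply/eqP.
  apply: eq_integral => t; rewrite inE => Kt.
  by rewrite gee0_abs // lee_fin mulr_ge0 ?w_ge0 // dot_cV_ge0.
apply: (le_integrable mK _ _ idot) => [|t Kt].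
  apply/measurable_EFinP; apply: measurable_funM mw _.
  by apply: measurable_funX; exact: mx.
have wt := w_ge0 t Kt.
rewrite /= lee_fin !ger0_norm ?(mulr_ge0 wt) ?sqr_ge0 ?dot_cV_ge0 //.
by rewrite ler_wpM2l // cV_sqr_le_dot.
Qed.

Lemma mx_wL2_trmx {p q} {A : R -> 'M[R]_(p, q)} :
  mx_wL2 A -> mx_wL2 (fun t => (A t)^T).
Proof. by move=> AL2 i j; under eq_fun do rewrite mxE; exact: AL2. Qed.

Lemma mx_wL2_mulmxr {p q r} (C : 'M[R]_(q, r)) {A : R -> 'M[R]_(p, q)} :
  mx_wL2 A -> mx_wL2 (fun t => A t *m C).
Proof.
move=> AL2 i j; under eq_fun do rewrite mxE.
by apply: wL2_sum => k; under eq_fun do rewrite mulrC; exact: wL2Z.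
Qed.

Lemma mx_wL2_kronI {m} k {v : R -> 'cV[R]_m} :
  mx_wL2 v -> mx_wL2 (fun t => kronI (v t) k).
Proof.
move=> vL2 i j; case: (mxtens_indexP i) => a b.
by under eq_fun do rewrite kronI_index mulrC; exact: wL2Z.
Qed.

Lemma mx_wL2_mul_wintegrable {p q r}
    {A : R -> 'M[R]_(p, q)} {B : R -> 'M[R]_(q, r)} :
  mx_wL2 A -> mx_wL2 B -> mx_wintegrable (fun t => A t *m B t).
Proof.
move=> AL2 BL2 i j.
have := integrable_EFin_sum mK (index_enum _)
  (fun k => wL2_mul_integrable (AL2 i k) (BL2 k j)).
by apply: eq_integrable => // t _; rewrite /= mxE mulr_sumr.
Qed.

Lemma mx_wintegrable_trmx {p q} {M : R -> 'M[R]_(p, q)} :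
  mx_wintegrable M -> mx_wintegrable (fun t => (M t)^T).
Proof.
move=> Mi i j; have := Mi j i.
by apply: eq_integrable => // t _; rewrite /= mxE.
Qed.

Lemma mx_wintegrable_mulmx {p p' q q'} (A : 'M[R]_(p', p)) (B : 'M[R]_(q, q'))
    {M : R -> 'M[R]_(p, q)} :
  mx_wintegrable M -> mx_wintegrable (fun t => A *m M t *m B).
Proof.
move=> Mi i j.
have := integrable_EFin_sum mK (index_enum _) (fun l =>
  integrable_EFin_sum mK (index_enum _) (fun k =>
    integrable_EFinZ mK (A i k * B l j) (Mi k l))).
apply: eq_integrable => // t _; rewrite /= mulmx3E mulr_sumr; congr EFin.
by apply: eq_bigr => l _; rewrite mulr_sumr; apply: eq_bigr => k _; ring.
Qed.

Lemma trmx_mxint p q (M : R -> 'M[R]_(p, q)) :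
  (mxint K w M)^T = mxint K w (fun t => (M t)^T).
Proof.
by apply/matrixP => i j; rewrite !mxE; apply: eq_Rintegral => t _; rewrite mxE.
Qed.

Lemma mulmx_mxint {p p' q q'} (A : 'M[R]_(p', p)) (B : 'M[R]_(q, q'))
    {M : R -> 'M[R]_(p, q)} :
  mx_wintegrable M ->
  A *m mxint K w M *m B = mxint K w (fun t => A *m M t *m B).
Proof.
move=> Mi; apply/matrixP => i j; rewrite mulmx3E mxE.
have -> : (fun t => w t * (A *m M t *m B) i j) =
    (fun t => \sum_l \sum_k A i k * B l j * (w t * M t k l)).
  apply/funext => t; rewrite mulmx3E mulr_sumr; apply: eq_bigr => l _.
  by rewrite mulr_sumr; apply: eq_bigr => k _; ring.
rewrite (Rintegral_sum mK); last first.
  by move=> l; apply: (integrable_EFin_sum mK) => k; exact: integrable_EFinZ.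
apply: eq_bigr => l _; rewrite (Rintegral_sum mK); last first.
  by move=> k; exact: integrable_EFinZ.
by apply: eq_bigr => k _; rewrite RintegralZl // mxE; ring.
Qed.

Lemma integral_quad_form_ge n d q (U : 'M[R]_n) (X : 'M[R]_(n, d * q))
    (Y : 'M[R]_(d * q)) (f : R -> 'cV[R]_d) (x : R -> 'cV[R]_n) (z : 'cV[R]_q) :
  L2w K w f -> L2w K w x -> psd (block_mx U (- X) (- X^T) Y) ->
  (2%:R *: ((mxint K w (fun t => kronI (f t) n *m x t))^T *m Xhat X *m z)
    - z^T *m mxint K w (fun t => (kronI (f t) q)^T *m Y *m kronI (f t) q)
        *m z) 0 0
  <= \int[mu]_(t in K) (w t * ((x t)^T *m U *m x t) 0 0).
Proof.
move=> /L2w_mx_wL2 fL2 /L2w_mx_wL2 xL2 UXY.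
have Kf k := mx_wL2_kronI k fL2.
have iP := mx_wintegrable_trmx (mx_wL2_mul_wintegrable (Kf n) xL2).
have iQ := mx_wL2_mul_wintegrable (mx_wL2_mulmxr Y (mx_wL2_trmx (Kf q))) (Kf q).
have iU00 := mx_wL2_mul_wintegrable (mx_wL2_mulmxr U (mx_wL2_trmx xL2)) xL2 0 0.
have iP00 := mx_wintegrable_mulmx 1%:M (Xhat X *m z) iP 0 0.
have iQ00 := mx_wintegrable_mulmx z^T z iQ 0 0.
(* Put [theta^T] and [W] between constant factors, which mxint absorbs. *)
rewrite trmx_mxint -[mxint _ _ _]mul1mx -mulmxA.
rewrite (mulmx_mxint _ _ iP) (mulmx_mxint _ _ iQ) !mxE.
have iP00' := integrable_EFinZ mK 2 iP00.
rewrite -(RintegralZl _ mK iP00) -(RintegralB mK iP00' iQ00).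
apply: le_Rintegral => //; first exact (integrable_EFinB mK iP00' iQ00).
move=> t Kt; rewrite mulrCA -mulrBr ler_wpM2l ?w_ge0 // mul1mx.
exact: psd_block_kronI_le.
Qed.

End WeightedL2.

Theorem theorem2 (R : realType) (K : set R) (w : R -> R) (d n rho : nat)
  (f : R -> 'cV[R]_d) (U : 'M[R]_n)
  (Y : 'M[R]_(d * (rho * n))) (X : 'M[R]_(n, d * (rho * n))) :
  measurable K ->
  (@lebesgue_measure R K != 0)%E ->
  (forall t, K t -> 0 <= w t) ->
  (@lebesgue_measure R).-integrable K (fun t => (w t)%:E) ->
  countable (K `&` [set t | w t = 0]) ->
  L2w K w f ->
  pd (mxint K w (fun t => f t *m (f t)^T)) ->
  psd U ->
  Y^T = Y ->
  psd (block_mx U (- X) (- X^T) Y) ->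
  let W := mxint K w (fun t => (kronI (f t) (rho * n))^T *m Y
                                 *m kronI (f t) (rho * n)) in
  let F := fun t => kronI (f t) n in
  (forall (z : 'cV[R]_(rho * n)) (x : R -> 'cV[R]_n),
     L2w K w x ->
     let theta := mxint K w (fun t => F t *m x t) in
     Rintegral (@lebesgue_measure R) K
       (fun t => w t * ((x t)^T *m U *m x t) 0 0)
     >= (2%:R *: (theta^T *m Xhat X *m z) - z^T *m W *m z) 0 0) /\
  (forall (Ups : 'M[R]_(d * n, rho * n)) (z : 'cV[R]_(rho * n))
          (x : R -> 'cV[R]_n),
     L2w K w x ->
     Ups *m z = mxint K w (fun t => F t *m x t) ->
     Rintegral (@lebesgue_measure R) K
       (fun t => w t * ((x t)^T *m U *m x t) 0 0)
     >= (z^T *m (Ups^T *m Xhat X + (Xhat X)^T *m Ups - W) *m z) 0 0).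
Proof.
move=> mK _ w_ge0 w_int _ Lf _ _ _ UXY W F.
split=> [z x Lx | Ups z x Lx UpszE]; first exact: integral_quad_form_ge.
by rewrite quad_form_sym UpszE; exact: integral_quad_form_ge.
Qed.
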